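(* Let $G$ be a Tanner graph whose smallest left (variable-node) degree $deg_l^-$ is at least 3, whose smallest right (check-node) degree $deg_r^-$ is at least 2, and whose girth $g$ satisfies $g>4$. Then $w^{BSC}_{\min}\ge (deg_l^- -1)^{\lceil g/4\rceil-1}$ and $w^{AWGN}_{\min}\ge (deg_l^- -1)^{\lceil g/4\rceil-1}$.
   Context: A Tanner graph $G$ is a finite bipartite graph with variable nodes $v_1,\dots,v_n$ and check nodes; its code consists of all $x\in\{0,1\}^n$ with every check node having an even number of neighbours $v_i$ with $x_i=1$. A degree-$\ell$ lift replaces each node by $\ell$ copies and each edge by a perfect matching between copy-sets; a lift-realizable pseudocodeword $p\in\mathbb{Z}_{\ge0}^n$ is obtained from a codeword of the code of a finite lift by letting $p_i$ be the number of copies of $v_i$ assigned 1. For nonzero $p$, with $e$ the smallest number such that the sum of the $e$ largest $p_i$ is at least $\frac12\sum_ip_i$, $w^{BSC}(p)=2e$ if equality holds and $2e-1$ otherwise; $w^{AWGN}(p)=(\sum_ip_i)^2/\sum_ip_i^2$. $w^{BSC}_{\min}$, $w^{AWGN}_{\min}$ are the minima of these weights over all nonzero lift-realizable pseudocodewords of $G$. *)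

From mathcomp Require Import all_boot all_order all_algebra all_fingroup.
Set Implicit Arguments. Unset Strict Implicit. Unset Printing Implicit Defensive.
Import Order.TTheory GRing.Theory Num.Theory.

(* A Tanner graph with variable nodes 'I_n and check nodes 'I_m is given by
   its (simple, bipartite) adjacency relation H v c. *)

Section Tanner.
Variables (n m : nat) (H : 'I_n -> 'I_m -> bool).

Definition ldeg (v : 'I_n) : nat := #|[set c | H v c]|.
Definition rdeg (c : 'I_m) : nat := #|[set v | H v c]|.

Definition is_min_left_degree (dl : nat) : Prop :=
  (forall v, dl <= ldeg v) /\ (exists v, ldeg v = dl).

Definition has_cycle_of_length (L : nat) : Prop :=
  exists k (v : 'I_k -> 'I_n) (c : 'I_k -> 'I_m),
    [/\ 2 <= k, L = 2 * k, injective v, injective c &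
        forall i : 'I_k, H (v i) (c i) && H (v (ordS i)) (c i)].

Definition is_girth (g : nat) : Prop :=
  has_cycle_of_length g /\ (forall L, has_cycle_of_length L -> g <= L).

(* A degree-l lift: every edge (v,c) is replaced by the perfect matching
   (v,i) -- (c, pi v c i) between the copy sets.  x is a codeword of the
   lift if every copy (c,j) of every check node has an even number of
   neighbours (v,i) in the lift with x v i = true. *)
Definition lift_codeword (l : nat) (pi : 'I_n -> 'I_m -> {perm 'I_l})
    (x : 'I_n -> 'I_l -> bool) : Prop :=
  forall (c : 'I_m) (j : 'I_l),
    ~~ odd #|[set u : 'I_n * 'I_l | [&& H u.1 c, pi u.1 c u.2 == j & x u.1 u.2]]|.

Definition lift_realizable (p : 'I_n -> nat) : Prop :=
  exists (l : nat) (pi : 'I_n -> 'I_m -> {perm 'I_l}) (x : 'I_n -> 'I_l -> bool),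
    lift_codeword pi x /\ forall v, p v = #|[set i | x v i]|.

End Tanner.

Section Weights.
Variables (n : nat) (p : 'I_n -> nat).

Definition ptotal : nat := \sum_i p i.

Definition topsum (e : nat) : nat :=
  \max_(S : {set 'I_n} | #|S| == e) \sum_(i in S) p i.

Definition bsc_e : nat := find (fun e => ptotal <= 2 * topsum e) (iota 0 n.+1).

Definition wBSC : nat :=
  if 2 * topsum bsc_e == ptotal then 2 * bsc_e else (2 * bsc_e).-1.

Definition wAWGN : rat :=
  ((ptotal%:R) ^+ 2 / (\sum_i (p i ^ 2)%N %:R))%R.

End Weights.

From mathcomp Require Import all_boot all_order all_algebra all_fingroup.
From mathcomp Require Import zify.
Set Implicit Arguments. Unset Strict Implicit. Unset Printing Implicit Defensive.
Import GRing.Theory Num.Theory.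

(* A lift-realizable pseudocodeword p satisfies the local inequality
   p u <= sum of p w over the other neighbours w of c, for every edge (u, c):
   a copy of c joined to an active copy of u sees an even number of active
   copies, hence a second one.  Let v maximise p and t = ceil(g/4) - 1.
   Iterating the local inequality along the non-backtracking walks of length 2t
   from v gives endpoint weights summing to at least (dl - 1)^t p v.  As
   4t < g, these endpoints are pairwise distinct and differ from v (otherwise
   two of the walks would close a cycle shorter than g), so
   p v (1 + (dl - 1)^t) <= sum p.  Finally both weights are at least
   sum p / max p - 1. *)

Section Walks.
Variables (n m : nat) (H : 'I_n -> 'I_m -> bool).

Definition adj (x y : 'I_n + 'I_m) : bool :=
  match x, y with
  | inl v, inr c | inr c, inl v => H v c
  | _, _ => false
  end.

Definition is_var (x : 'I_n + 'I_m) : bool := if x is inl _ then true else false.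

Lemma adj_sym : symmetric adj.
Proof. by do 2 case. Qed.

Lemma adj_irrefl : irreflexive adj.
Proof. by case. Qed.

Lemma adj_is_var x y : adj x y -> is_var y = ~~ is_var x.
Proof. by case: x; case: y. Qed.

Definition is_walk (f : nat -> 'I_n + 'I_m) (L : nat) : Prop :=
  forall i, i < L -> adj (f i) (f i.+1).

Definition nonbacktracking (f : nat -> 'I_n + 'I_m) (L : nat) : Prop :=
  forall i, i.+2 <= L -> f i != f i.+2.

Lemma is_walk_shift f L a L' :
  is_walk f L -> a + L' <= L -> is_walk (fun i => f (a + i)) L'.
Proof. by move=> fw aL i iL; rewrite addnS; apply: fw; lia. Qed.

Lemma nonbacktracking_shift f L a L' :
  nonbacktracking f L -> a + L' <= L -> nonbacktracking (fun i => f (a + i)) L'.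
Proof. by move=> fnb aL i iL; rewrite !addnS; apply: fnb; lia. Qed.

Lemma is_var_walk f L i :
  is_walk f L -> i <= L -> is_var (f i) = is_var (f 0) (+) odd i.
Proof.
move=> fw; elim: i => [|i IH] iL; first by rewrite addbF.
by rewrite (adj_is_var (fw i iL)) IH 1?ltnW // oddS addbN.
Qed.

Lemma walk_alternates f L u :
  is_walk f L -> 0 < L -> f 0 = inl u ->
  exists (v : nat -> 'I_n) (c : nat -> 'I_m),
    (forall j, 2 * j <= L -> f (2 * j) = inl (v j)) /\
    (forall j, 2 * j < L -> f (2 * j).+1 = inr (c j)).
Proof.
move=> fw L0 f0.
have parity i : i <= L -> is_var (f i) = ~~ odd i.
  by move=> iL; rewrite (is_var_walk fw iL) f0.
have := parity 1 L0; case: (f 1) => [//|c0 _].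
exists (fun j => if f (2 * j) is inl v then v else u).
exists (fun j => if f (2 * j).+1 is inr c then c else c0).
split=> j /parity; rewrite ?oddS oddM.
  by case: (f (2 * j)).
by case: (f (2 * j).+1).
Qed.

Lemma var_closed_walk_cycle f L :
  is_walk f L -> is_var (f 0) -> 2 < L -> f L = f 0 ->
  injective (fun i : 'I_L => f i) -> has_cycle_of_length H L.
Proof.
move=> fw f0 L2 fL finj.
have f_inj i j : i < L -> j < L -> f i = f j -> i = j.
  by move=> iL jL fij; have /(congr1 val) := finj (Ordinal iL) (Ordinal jL) fij.
have evenL : ~~ odd L.
  by have := is_var_walk fw (leqnn L); rewrite fL f0 => /esym.
set k := L./2.
have Lk : L = 2 * k by rewrite mul2n -[LHS]odd_double_half (negbTE evenL).
case E0: (f 0) f0 => [u|] // _.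
have [v [c [fv fc]]] := walk_alternates fw (ltnW (ltnW L2)) E0.
have vk : v k = v 0.
  by apply: (@inl_inj _ 'I_m); rewrite -fv -?fv -?Lk ?fL ?muln0 //; lia.
exists k, (fun j : 'I_k => v j), (fun j : 'I_k => c j); split => //.
- lia.
- move=> i j /= vij; apply: ord_inj; have := ltn_ord i; have := ltn_ord j => jk ik.
  suff: 2 * i = 2 * j by lia.
  by apply: f_inj; rewrite ?fv ?vij //; lia.
- move=> i j /= cij; apply: ord_inj; have := ltn_ord i; have := ltn_ord j => jk ik.
  suff: (2 * i).+1 = (2 * j).+1 by lia.
  by apply: f_inj; rewrite ?fc ?cij //; lia.
- move=> i; have ik := ltn_ord i; apply/andP; split.
    have iL : 2 * i < L by lia.
    by have := fw _ iL; rewrite (fv _ (ltnW iL)) (fc _ iL).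
  have -> : v (ordS i) = v i.+1.
    rewrite /=; case: (ltnP i.+1 k) => [lt|ge]; first by rewrite modn_small.
    have -> : i.+1 = k by lia.
    by rewrite modnn vk.
  have iL : (2 * i).+1 < L by lia.
  have i1L : 2 * i.+1 <= L by lia.
  have := fw _ iL; rewrite (fc _ (ltnW iL)) (_ : (2 * i).+2 = 2 * i.+1); last lia.
  by rewrite (fv _ i1L).
Qed.

Definition cat_rev (f1 f2 : nat -> 'I_n + 'I_m) L i :=
  if i <= L then f1 i else f2 (2 * L - i).

Lemma cat_rev_r f1 f2 L i :
  f1 L = f2 L -> L <= i -> cat_rev f1 f2 L i = f2 (2 * L - i).
Proof.
move=> eL Li; rewrite /cat_rev; case: ifP => // iL.
have -> : i = L by lia.
by rewrite eL; congr f2; lia.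
Qed.

Lemma is_walk_cat_rev f1 f2 L :
  is_walk f1 L -> is_walk f2 L -> f1 L = f2 L -> is_walk (cat_rev f1 f2 L) (2 * L).
Proof.
move=> w1 w2 eL i iL; case: (ltnP i L) => [ltiL|leLi].
  by rewrite /cat_rev ltiL (ltnW ltiL); apply: w1.
rewrite (cat_rev_r eL leLi) (cat_rev_r eL (leqW leLi)) adj_sym.
by rewrite (_ : 2 * L - i = (2 * L - i.+1).+1); [apply: w2 | ]; lia.
Qed.

Lemma nonbacktracking_cat_rev f1 f2 L :
  nonbacktracking f1 L -> nonbacktracking f2 L ->
  f1 L = f2 L -> f1 L.-1 != f2 L.-1 -> nonbacktracking (cat_rev f1 f2 L) (2 * L).
Proof.
move=> nb1 nb2 eL ne i iL.
case: (ltnP i.+1 L) => [lt|ge].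
  by rewrite /cat_rev lt (ltnW (ltnW lt)); apply: nb1.
case: (leqP L i) => [le|gt].
  rewrite (cat_rev_r eL le) (cat_rev_r eL (leqW (leqW le))) eq_sym.
  by rewrite (_ : 2 * L - i = (2 * L - i.+2).+2); [apply: nb2 | ]; lia.
rewrite (cat_rev_r eL (_ : L <= i.+2)); last lia.
rewrite /cat_rev (ltnW gt) (_ : 2 * L - i.+2 = L.-1); last lia.
by rewrite (_ : i = L.-1) //; lia.
Qed.

End Walks.

Definition swap_sum (A B : Type) (x : A + B) : B + A :=
  match x with inl a => inr a | inr b => inl b end.

Lemma swap_sumK (A B : Type) : cancel (@swap_sum A B) (@swap_sum B A).
Proof. by case. Qed.

Definition transpose_tanner n m (H : 'I_n -> 'I_m -> bool) : 'I_m -> 'I_n -> bool :=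
  fun c v => H v c.

Lemma adj_transpose n m (H : 'I_n -> 'I_m -> bool) x y :
  adj (transpose_tanner H) (swap_sum x) (swap_sum y) = adj H x y.
Proof. by case: x; case: y. Qed.

Lemma has_cycle_transpose n m (H : 'I_n -> 'I_m -> bool) L :
  has_cycle_of_length (transpose_tanner H) L -> has_cycle_of_length H L.
Proof.
case=> k [c [v [k2 Lk cinj vinj cv]]].
exists k, v, (c \o @ordS k); split => //; first exact: inj_comp cinj (@ordS_inj k).
move=> i; have := cv i; have := cv (ordS i); rewrite /transpose_tanner /=.
by move=> /andP[-> _] /andP[_ ->].
Qed.

Lemma simple_closed_walk_cycle n m (H : 'I_n -> 'I_m -> bool) f L :
  is_walk H f L -> 2 < L -> f L = f 0 -> injective (fun i : 'I_L => f i) ->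
  has_cycle_of_length H L.
Proof.
move=> fw L2 fL finj.
case f0: (is_var (f 0)); first exact: (var_closed_walk_cycle fw).
apply: has_cycle_transpose.
apply: (@var_closed_walk_cycle m n _ (fun i => swap_sum (f i))) => //=.
- by move=> i iL; rewrite adj_transpose; apply: fw.
- by case: (f 0) f0.
- by rewrite fL.
- by move=> i j /(can_inj (@swap_sumK _ _))/finj.
Qed.

Section Girth.
Variables (n m : nat) (H : 'I_n -> 'I_m -> bool) (g : nat).
Hypothesis girth_min : forall L, has_cycle_of_length H L -> g <= L.

Lemma girth_le_closed_walk f L :
  is_walk H f L -> nonbacktracking f L -> 0 < L -> f L = f 0 -> g <= L.
Proof.
elim/ltn_ind: L f => L IH f fw fnb L0 fL.
have [/injectiveP finj|/injectivePn[i [j neq_ij fij]]] :=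
  boolP (injectiveb (fun i : 'I_L => f i)).
  have L2 : 2 < L.
    case: L {IH} fw fnb L0 fL finj => [|[|[|L]]] // fw fnb _ fL _.
      by have := fw 0 isT; rewrite fL adj_irrefl.
    by have := fnb 0 isT; rewrite fL eqxx.
  exact/girth_min/(simple_closed_walk_cycle fw L2 fL finj).
wlog lt_ij : i j neq_ij fij / i < j.
  move=> wl; case: (ltngtP i j) => [|ji|/ord_inj eij]; first exact: wl.
    by apply: (wl j i); rewrite 1?eq_sym.
  by rewrite eij eqxx in neq_ij.
have jL := ltn_ord j; have ijL : i + (j - i) <= L by lia.
apply: leq_trans
  (IH (j - i) _ _ (is_walk_shift fw ijL) (nonbacktracking_shift fnb ijL) _ _) _;
  try lia.
by rewrite subnKC ?addn0 // ltnW.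
Qed.

Lemma nonbacktracking_walks_eq f1 f2 L :
  is_walk H f1 L -> is_walk H f2 L -> nonbacktracking f1 L -> nonbacktracking f2 L ->
  f1 0 = f2 0 -> f1 L = f2 L -> 2 * L < g -> forall i, i <= L -> f1 i = f2 i.
Proof.
elim: L => [|L IH] w1 w2 nb1 nb2 e0 eL Lg i iL.
  by move: iL; rewrite leqn0 => /eqP->.
have [eL'|neL] := eqVneq (f1 L) (f2 L).
  case: (ltnP L i) => [Li|iL']; first by rewrite (_ : i = L.+1) //; lia.
  apply: IH => //; try lia;
    move=> j jL; [apply: w1 | apply: w2 | apply: nb1 | apply: nb2]; lia.
have closed : cat_rev f1 f2 L.+1 (2 * L.+1) = cat_rev f1 f2 L.+1 0.
  by rewrite (cat_rev_r eL) ?subnn /cat_rev /= ?e0 //; lia.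
have pos : 0 < 2 * L.+1 by lia.
have := girth_le_closed_walk (is_walk_cat_rev w1 w2 eL)
  (nonbacktracking_cat_rev nb1 nb2 eL neL) pos closed.
lia.
Qed.

End Girth.

Section TreeWalks.
Variables (n m : nat) (H : 'I_n -> 'I_m -> bool).

(* Non-backtracking walks of length 2k from u, listed without u, that do not
   start through cp (the check from which u is reached in the recursion). *)
Fixpoint nbwalks (k : nat) (u : 'I_n) (cp : 'I_m) : seq (seq ('I_n + 'I_m)) :=
  if k is k'.+1 then
    [seq inr c :: s | c <- enum [pred c | H u c && (c != cp)],
       s <- [seq inl w :: s' | w <- enum [pred w | H w c && (w != u)],
                               s' <- nbwalks k' w c]]
  else [:: [::]].

(* Padding with the endpoint makes walk_of_cons2 hold for every index. *)
Definition walk_of (u : 'I_n) (s : seq ('I_n + 'I_m)) (i : nat) : 'I_n + 'I_m :=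
  nth (last (inl u) s) (inl u :: s) i.

Lemma walk_of_size u s : walk_of u s (size s) = last (inl u) s.
Proof. exact: (nth_last _ (inl u :: s)). Qed.

Lemma walk_of_cons2 u c w s i : walk_of u [:: inr c, inl w & s] i.+2 = walk_of w s i.
Proof. by []. Qed.

Lemma nbwalks_uniq k u cp : uniq (nbwalks k u cp).
Proof.
elim: k u cp => [|k IH] u cp //=.
apply: allpairs_uniq_dep => [|c _|]; first exact: enum_uniq.
  apply: allpairs_uniq_dep => [|w _|]; [exact: enum_uniq | exact: IH |].
  by move=> [? ?] [? ?] _ _ [-> ->].
by move=> [? ?] [? ?] _ _ [-> ->].
Qed.

Lemma nbwalksP k u cp s : s \in nbwalks k u cp ->
  [/\ size s = 2 * k, is_walk H (walk_of u s) (2 * k),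
      nonbacktracking (walk_of u s) (2 * k) & 0 < k -> walk_of u s 1 != inr cp].
Proof.
elim: k u cp s => [|k IH] u cp s /=.
  by rewrite inE => /eqP->; split=> // i; rewrite muln0.
case/allpairsPdep => c [_ [+ /allpairsPdep[w [s' [+ + ->]]] ->]].
rewrite !mem_enum !inE => /andP[Huc ncp] /andP[Hwc nwu] /IH[sz w' nb' first'].
split=> [|[|[|i]] iL|[|[|i]] iL|_] //=.
- by rewrite sz; lia.
- by rewrite !walk_of_cons2; apply: w'; lia.
- by apply: contra nwu => /eqP[->].
- by rewrite walk_of_cons2 eq_sym; apply: first'; lia.
- by rewrite !walk_of_cons2; apply: nb'; lia.
Qed.

Definition vweight (p : 'I_n -> nat) (x : 'I_n + 'I_m) : nat :=
  if x is inl v then p v else 0.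

Lemma nbwalks_weight_ge p dl k u cp :
  (forall u c, H u c -> p u <= \sum_(w | H w c && (w != u)) p w) ->
  (forall u, dl <= ldeg H u) ->
  dl.-1 ^ k * p u <= \sum_(s <- nbwalks k u cp) vweight p (last (inl u) s).
Proof.
move=> loc deg; elim: k u cp => [|k IH] u cp /=; first by rewrite big_seq1 mul1n.
have deg_cp : dl.-1 <= #|[pred c | H u c && (c != cp)]|.
  have := deg u; rewrite /ldeg (cardsD1 cp) inE.
  rewrite (eq_card (_ : [set c | H u c] :\ cp =i [pred c | H u c && (c != cp)])).
    by case: (H u cp); move: #|_| => N /=; lia.
  by move=> c; rewrite !inE andbC.
rewrite big_allpairs_dep big_enum /= expnS -mulnA.
apply: leq_trans (_ : #|[pred c | H u c && (c != cp)]| * (dl.-1 ^ k * p u) <= _).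
  by rewrite leq_mul2r deg_cp orbT.
rewrite -sum_nat_const; apply: leq_sum => c; rewrite inE => /andP[Huc _].
rewrite big_allpairs_dep big_enum /=.
apply: leq_trans (_ : \sum_(w in [pred w | H w c && (w != u)]) dl.-1 ^ k * p w <= _).
  by rewrite -big_distrr leq_mul2l (loc _ _ Huc) orbT.
by apply: leq_sum => w _; apply: IH.
Qed.

Variable g : nat.
Hypothesis girth_min : forall L, has_cycle_of_length H L -> g <= L.

Lemma nbwalks_last_inj k u cp :
  4 * k < g -> {in nbwalks k u cp &, injective (last (inl u))}.
Proof.
move=> kg s1 s2 /nbwalksP[sz1 w1 nb1 _] /nbwalksP[sz2 w2 nb2 _] e.
have e2k : walk_of u s1 (2 * k) = walk_of u s2 (2 * k).
  by rewrite -{1}sz1 walk_of_size e -sz2 walk_of_size.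
have kg' : 2 * (2 * k) < g by lia.
have eq12 := nonbacktracking_walks_eq girth_min w1 w2 nb1 nb2 erefl e2k kg'.
suff [] : inl u :: s1 = inl u :: s2 by [].
apply: (@eq_from_nth _ (last (inl u) s2)); first by rewrite /= sz1 sz2.
by move=> i; rewrite /= sz1 => ik; have := eq12 i ik; rewrite /walk_of e.
Qed.

Lemma nbwalks_last_neq k u cp s :
  0 < k -> 2 * k < g -> s \in nbwalks k u cp -> last (inl u) s != inl u.
Proof.
move=> k0 kg /nbwalksP[sz w nb _]; apply/eqP => e.
have closed : walk_of u s (2 * k) = walk_of u s 0 by rewrite -sz walk_of_size e.
have pos : 0 < 2 * k by lia.
have := girth_le_closed_walk girth_min w nb pos closed; lia.
Qed.

Lemma ptotal_tree_bound p dl t v :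
  (forall u c, H u c -> p u <= \sum_(w | H w c && (w != u)) p w) ->
  (forall u, dl <= ldeg H u) -> 0 < dl -> 0 < t -> 4 * t < g ->
  p v * (dl.-1 ^ t).+1 <= ptotal p.
Proof.
move=> loc deg dl_gt0 t_gt0 t_lt.
have /card_gt0P[cp _] : 0 < ldeg H v by have := deg v; lia.
have ends_uniq : uniq (inl v :: map (last (inl v)) (nbwalks t v cp)).
  rewrite /= map_inj_in_uniq ?nbwalks_uniq ?andbT; last exact: nbwalks_last_inj.
  apply/mapP => -[s sW /esym/eqP]; apply/negP; apply: nbwalks_last_neq sW => //; lia.
have : \sum_(x <- inl v :: map (last (inl v)) (nbwalks t v cp)) vweight p x <= ptotal p.
  rewrite big_uniq // big_mkcond /=.
  apply: leq_trans (_ : \sum_x vweight p x <= _).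
    by apply: leq_sum => x _; case: ifP.
  by rewrite big_sumType /= [X in _ + X]big1 ?addn0.
have := @nbwalks_weight_ge p dl t v cp loc deg.
rewrite big_cons big_map /=; nia.
Qed.

End TreeWalks.

Lemma lift_realizable_local n m (H : 'I_n -> 'I_m -> bool) p :
  lift_realizable H p -> forall u c, H u c -> p u <= \sum_(w | H w c && (w != u)) p w.
Proof.
move=> [l [pi [x [cw pE]]]] u c Huc.
pose seen w j := x w ((pi w c)^-1 j)%g.
have p_seen w : p w = \sum_j seen w j.
  by rewrite pE -sum1dep_card big_mkcond (reindex_inj (@perm_inj _ (pi w c)^-1%g)).
have even_seen j : ~~ odd (\sum_(w | H w c) seen w j).
  have := cw c j; congr (~~ odd _).
  rewrite -big_mkcondr sum1dep_card -(card_imset _ (_ : injective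
    (fun w => (w, ((pi w c)^-1)%g j)))); last by move=> ? ? [].
  apply: eq_card => -[w i]; rewrite !inE /=.
  apply/and3P/imsetP => [[Hwc /eqP <- xwi]|[w' + [-> ->]]].
    by exists w; rewrite ?inE /seen permK ?Hwc ?xwi.
  by rewrite inE => /andP[Hwc sw]; rewrite permKV eqxx.
have step j : seen u j <= \sum_(w | H w c && (w != u)) seen w j.
  case Su: (seen u j) => //.
  by have := even_seen j; rewrite (bigD1 u) //= Su add1n oddS negbK => /odd_gt0.
rewrite p_seen (eq_bigr _ (fun w _ => p_seen w)) exchange_big /=.
by apply: leq_sum => j _; apply: step.
Qed.

Lemma ptotal_le_topsum_bsc_e n (p : 'I_n -> nat) : ptotal p <= 2 * topsum p (bsc_e p).
Proof.
have top_n : ptotal p <= topsum p n.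
  rewrite /ptotal (eq_bigl (fun i => i \in [set: 'I_n])) => [|i]; last by rewrite in_setT.
  apply: (@leq_bigmax_cond _ _ (fun S : {set 'I_n} => \sum_(i in S) p i)).
  by rewrite cardsT card_ord.
have has_e : has (fun e => ptotal p <= 2 * topsum p e) (iota 0 n.+1).
  by apply/hasP; exists n; rewrite ?mem_iota //=; lia.
have := nth_find 0 has_e; rewrite nth_iota ?add0n //.
by move: has_e; rewrite has_find size_iota.
Qed.

Section Weights.
Variables (n : nat) (p : 'I_n -> nat) (M : nat).
Hypotheses (p_le : forall i, p i <= M) (M_gt0 : 0 < M).

Lemma topsum_le e : topsum p e <= e * M.
Proof.
apply/bigmax_leqP => S /eqP <-; rewrite -sum_nat_const.
by apply: leq_sum => i _; apply: p_le.
Qed.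

Lemma wBSC_ge B : M * B.+1 <= ptotal p -> B <= wBSC p.
Proof.
move=> hT; have := leq_trans hT (ptotal_le_topsum_bsc_e p).
have := topsum_le (bsc_e p); rewrite /wBSC; case: ifP => _; nia.
Qed.

Lemma wAWGN_ge B : M * B.+1 <= ptotal p -> (B%:R <= wAWGN p :> rat)%R.
Proof.
move=> hT; rewrite /wAWGN -natr_sum.
set T := ptotal p; set S2 := \sum_i p i ^ 2.
have S2_le : S2 <= M * T.
  rewrite /T /ptotal big_distrr; apply: leq_sum => i _.
  by rewrite -mulnn leq_mul2r p_le orbT.
have T_le : T <= S2.
  by apply: leq_sum => i _; case: (p i) => // k; rewrite -mulnn leq_pmulr.
rewrite ler_pdivlMr ?ltr0n; last lia.
by rewrite -natrX -natrM ler_nat -mulnn; nia.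
Qed.

End Weights.

Theorem corollary1 (n m : nat) (H : 'I_n -> 'I_m -> bool) (dl g : nat) :
  is_min_left_degree H dl -> 3 <= dl ->
  (forall c : 'I_m, 2 <= rdeg H c) ->
  is_girth H g -> 4 < g ->
  forall p : 'I_n -> nat, lift_realizable H p -> (exists i, p i != 0) ->
    (dl.-1 ^ ((g + 3) %/ 4).-1 <= wBSC p)%N /\
    ((dl.-1 ^ ((g + 3) %/ 4).-1)%:R <= wAWGN p :> rat)%R.
Proof.
move=> [deg _] dl3 _ [_ girth_min] g4 p preal [i0 p_i0].
have [v p_max] : exists v, forall i, p i <= p v.
  by exists [arg max_(i > i0) p i]; case: arg_maxnP => // j _ j_max i; apply: j_max.
have pv_gt0 : 0 < p v by have := p_max i0; lia.
set t := ((g + 3) %/ 4).-1.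
have dl_gt0 : 0 < dl by lia.
have t_gt0 : 0 < t by lia.
have t_lt : 4 * t < g by lia.
have bound := ptotal_tree_bound girth_min v (lift_realizable_local preal) deg
  dl_gt0 t_gt0 t_lt.
by split; [exact: (wBSC_ge p_max pv_gt0 bound) | exact: (wAWGN_ge p_max pv_gt0 bound)].
Qed.
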